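(* For every positive integer $n$, let $B_n$ be the $n\times n$ matrix over $\mathbb{Z}$ whose $(i,j)$-entry ($1\le i,j\le n$) is $1$ if $i+j$ is a power of two and $0$ otherwise. Then $\det B_n\in\{1,-1\}$.
   Context: Powers of two are $1,2,4,8,\ldots$. *)

From mathcomp Require Import all_boot all_order all_algebra.
Set Implicit Arguments. Unset Strict Implicit. Unset Printing Implicit Defensive.
Import GRing.Theory Num.Theory.

(* m is a power of two: m = 2^k for some k (k < m+1 suffices since 2^k > k). *)
Definition is_pow2 (m : nat) : bool := [exists k : 'I_m.+1, m == 2 ^ k].

(* B_n over int, indices i j : 'I_n correspond to 1-based i+1, j+1. *)
Definition Bmat (n : nat) : 'M[int]_n :=
  \matrix_(i < n, j < n) (if is_pow2 (i.+1 + j.+1) then 1%R else 0%R).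

(* Let q be the largest power of two with q <= n < 2q.  If 1 <= i, j <= n,
   i + j is a power of two and one of i, j is at least q, then q < i + j < 4q
   forces i + j = 2q.  Hence a permutation s of {1..n} with every i + s i a
   power of two maps [2q - n, n] onto itself by i |-> 2q - i and restricts to
   such a permutation of {1..2q - n - 1}; by induction s is unique, and the
   same recursion constructs it.  So exactly one term of the Leibniz expansion
   of det B_n is nonzero, and it is the sign of s. *)
From mathcomp Require Import all_boot all_fingroup all_algebra zify.

Lemma is_pow2P m : reflect (exists k, m = 2 ^ k) (is_pow2 m).
Proof.
apply: (iffP existsP) => [[k /eqP ->]|[k ->]]; first by exists k.
have k_lt : k < (2 ^ k).+1 by rewrite ltnS ltnW // ltn_expl.
by exists (Ordinal k_lt).
Qed.

Lemma is_pow2_double e a :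
  is_pow2 a -> 2 ^ e < a -> a < 4 * 2 ^ e -> a = 2 * 2 ^ e.
Proof.
move=> /is_pow2P [k ->] lt_ea lt_ae.
have lt_ek : e < k by rewrite -(ltn_exp2l _ _ (isT : 1 < 2)).
have lt_ke : k < e.+2 by rewrite -(ltn_exp2l _ _ (isT : 1 < 2)) !expnS mulnA.
have -> : k = e.+1 by lia.
by rewrite expnS.
Qed.

Definition pow2_bijection n (s : nat -> nat) :=
  [/\ forall i, 0 < i <= n -> 0 < s i <= n /\ is_pow2 (i + s i),
      forall i j, 0 < i <= n -> 0 < j <= n -> s i = s j -> i = j &
      forall j, 0 < j <= n -> exists2 i, 0 < i <= n & s i = j].

Definition pow2_involution n (f : nat -> nat) :=
  forall i, 0 < i <= n -> [/\ 0 < f i <= n, is_pow2 (i + f i) & f (f i) = i].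

Lemma pow2_involution_bijection n f :
  pow2_involution n f -> pow2_bijection n f.
Proof.
move=> f_inv; split.
- by move=> i /f_inv [].
- move=> i j /f_inv [_ _ ffi] /f_inv [_ _ ffj] eq_f.
  by rewrite -ffi -ffj eq_f.
- by move=> j /f_inv [f_j _ ffj]; exists (f j).
Qed.

Section Pow2Bijection.

Variables (n : nat) (s : nat -> nat).
Hypotheses (n_gt0 : 0 < n) (s_bij : pow2_bijection n s).

Let q := 2 ^ trunc_log 2 n.
Let q_le_n : q <= n. Proof. exact: trunc_logP. Qed.
Let n_lt_2q : n < 2 * q. Proof. by rewrite /q -expnS trunc_log_ltn. Qed.

Let sum_top i : 0 < i <= n -> q <= i \/ q <= s i -> i + s i = 2 * q.
Proof.
move=> i_in i_top; have [s_in _ _] := s_bij.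
have [s_i pow2_i] := s_in i i_in.
have := @is_pow2_double (trunc_log 2 n) _ pow2_i; rewrite -/q; lia.
Qed.

Lemma pow2_bijection_reflect i : 2 * q - n <= i <= n -> s i = 2 * q - i.
Proof.
move=> i_mid; have [q_le_i|i_lt_q] := leqP q i.
  by have := sum_top i ltac:(lia) ltac:(lia); lia.
have [_ _ s_onto] := s_bij.
have [j j_in s_j] := s_onto (2 * q - i) ltac:(lia).
have := sum_top j j_in ltac:(lia); rewrite s_j => sum_j.
by rewrite -s_j; congr s; lia.
Qed.

Lemma pow2_bijection_restrict : pow2_bijection (2 * q - n - 1) s.
Proof.
have [s_in s_inj s_onto] := s_bij.
split.
- move=> i i_low; have [s_i pow2_i] := s_in i ltac:(lia); split => //.
  have [s_mid|] := leqP (2 * q - n) (s i); last lia.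
  have := pow2_bijection_reflect (2 * q - s i) ltac:(lia).
  rewrite subKn; last lia.
  by move=> /s_inj; lia.
- by move=> i j i_low j_low; apply: s_inj; lia.
- move=> j j_low; have [i i_in s_i] := s_onto j ltac:(lia).
  exists i => //; have [i_mid|] := leqP (2 * q - n) i; last lia.
  by move: s_i; rewrite (pow2_bijection_reflect i ltac:(lia)); lia.
Qed.

End Pow2Bijection.

Lemma pow2_bijection_unique n s t : pow2_bijection n s -> pow2_bijection n t ->
  forall i, 0 < i <= n -> s i = t i.
Proof.
elim/ltn_ind: n s t => n IHn s t s_bij t_bij i i_in.
have n_gt0 : 0 < n by lia.
have q_le_n := trunc_logP (isT : 1 < 2) n_gt0.
have [i_mid|i_low] := leqP (2 * 2 ^ trunc_log 2 n - n) i.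
  have s_refl := pow2_bijection_reflect _ _ n_gt0 s_bij i.
  by rewrite s_refl ?(pow2_bijection_reflect _ _ n_gt0 t_bij i) //; lia.
apply: (IHn _ _ _ _ (pow2_bijection_restrict _ _ n_gt0 s_bij)
                    (pow2_bijection_restrict _ _ n_gt0 t_bij)); lia.
Qed.

Lemma exists_pow2_involution n : exists f, pow2_involution n f.
Proof.
elim/ltn_ind: n => n IHn.
have [->|n_gt0] := posnP n; first by exists id => i; lia.
set q := 2 ^ trunc_log 2 n.
have q_le_n : q <= n by apply: trunc_logP.
have n_lt_2q : n < 2 * q by rewrite /q -expnS trunc_log_ltn.
have [g g_inv] := IHn (2 * q - n - 1) ltac:(lia).
exists (fun i => if 2 * q - n <= i then 2 * q - i else g i) => i i_in.
have [i_mid|i_low] := leqP (2 * q - n) i.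
  have -> : 2 * q - n <= 2 * q - i by lia.
  split; [lia | | lia].
  by apply/is_pow2P; exists (trunc_log 2 n).+1; rewrite expnS -/q; lia.
have [g_i pow2_i ggi] := g_inv i ltac:(lia).
have -> : 2 * q - n <= g i = false by apply/negbTE; lia.
by split => //; lia.
Qed.

Definition pow2_perm {n} (s : 'S_n) :=
  forall i : 'I_n, is_pow2 (i.+1 + (s i).+1).

Lemma pow2_perm_bijection n (s : 'S_n.+1) :
  pow2_perm s -> pow2_bijection n.+1 (fun k => (s (inord k.-1)).+1).
Proof.
have succ_inord_pred k : 0 < k <= n.+1 -> (inord k.-1 : 'I_n.+1).+1 = k.
  by move=> k_in; rewrite inordK; lia.
move=> s_pow2; split.
- move=> i i_in; split; first by have := ltn_ord (s (inord i.-1)); lia.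
  by have := s_pow2 (inord i.-1); rewrite succ_inord_pred.
- move=> i j i_in j_in [/val_inj/perm_inj eq_ij].
  by rewrite -(succ_inord_pred i) // -(succ_inord_pred j) // eq_ij.
- move=> j j_in; exists (s^-1 (inord j.-1))%g.+1.
    by have := ltn_ord (s^-1 (inord j.-1))%g; lia.
  by rewrite inord_val permKV succ_inord_pred.
Qed.

Lemma exists_pow2_perm n : exists s : 'S_n.+1, pow2_perm s.
Proof.
have [f /pow2_involution_bijection [f_in f_inj _]] :=
  exists_pow2_involution n.+1.
pose g (i : 'I_n.+1) : 'I_n.+1 := inord (f i.+1).-1.
have g_val i : (g i).+1 = f i.+1.
  by have [f_i _] := f_in i.+1 (ltn_ord i); rewrite inordK; lia.
have g_inj : injective g.
  move=> i j /(congr1 (fun k : 'I_n.+1 => k.+1)); rewrite !g_val.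
  by move=> /(f_inj i.+1 j.+1 (ltn_ord i) (ltn_ord j)) [eq_ij]; apply: val_inj.
exists (perm g_inj) => i; rewrite permE g_val.
by have [_] := f_in i.+1 (ltn_ord i).
Qed.

Lemma pow2_perm_unique n (s t : 'S_n.+1) : pow2_perm s -> pow2_perm t -> s = t.
Proof.
move=> /pow2_perm_bijection s_bij /pow2_perm_bijection t_bij.
apply/permP => i; apply: val_inj; apply: succn_inj.
have := pow2_bijection_unique _ _ _ s_bij t_bij i.+1 (ltn_ord i).
by rewrite /= inord_val.
Qed.

Import GRing.Theory.
Local Open Scope ring_scope.

Lemma det_perm_support {R : comPzRingType} {n} (A : 'M[R]_n) (s0 : 'S_n) :
  (forall s : 'S_n, (forall i, A i (s i) != 0) -> s = s0) ->
  \det A = (-1) ^+ s0 * \prod_i A i (s0 i).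
Proof.
move=> s0_uniq; rewrite /determinant (bigD1 s0) //=.
rewrite [X in _ + X]big1 ?addr0 // => s s_ne.
have [/forallP/s0_uniq s_eq|/forallPn [i /negPn /eqP A_i0]] :=
  boolP [forall i, A i (s i) != 0].
  by rewrite s_eq eqxx in s_ne.
by rewrite (bigD1 i) //= A_i0 mul0r mulr0.
Qed.

Theorem mainTheorem5 (n : nat) (hn : (0 < n)%N) :
  \det (Bmat n) = 1 \/ \det (Bmat n) = -1.
Proof.
case: n hn => // n _.
have [s0 s0_pow2] := exists_pow2_perm n.
rewrite (det_perm_support _ s0) => [|s s_support].
  rewrite big1 => [|i _]; last by rewrite mxE s0_pow2.
  by rewrite mulr1; case: odd_perm; [right|left].
apply: pow2_perm_unique => // i.
by move: (s_support i); rewrite mxE; case: is_pow2.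
Qed.
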